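(* Let $X$ be a connected separable Tychonoff space and let $Z$ be a topological space having the same multi-deck as $X$, i.e.\ there is a bijection $f\colon X \to Z$ such that $X\setminus\{x\}$ is homeomorphic to $Z \setminus\{f(x)\}$ for every $x \in X$. Then $Z$ is a connected separable Tychonoff space.
   Context: The multi-deck of a space $X$ is the multiset $\{[X\setminus\{x\}]_\sim : x \in X\}$ of homeomorphism classes of the subspaces $X\setminus\{x\}$, recording for each class how many points $x$ give it; two spaces have the same multi-deck exactly when there is a bijection $f\colon X\to Z$ with $X\setminus\{x\}\cong Z\setminus\{f(x)\}$ for all $x$. Tychonoff means completely regular and $T_1$. *)

From Stdlib Require Import Reals.
Open Scope R_scope.

Definition topology {T : Type} (op : (T -> Prop) -> Prop) : Prop :=
  op (fun _ => True) /\
  (forall U V, op U -> op V -> op (fun x => U x /\ V x)) /\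
  (forall F : (T -> Prop) -> Prop,
      (forall U, F U -> op U) -> op (fun x => exists U, F U /\ U x)).

Definition subspace_open {T : Type} (op : (T -> Prop) -> Prop) (A : T -> Prop)
  : ({x : T | A x} -> Prop) -> Prop :=
  fun V => exists U, op U /\ forall y : {x : T | A x}, V y <-> U (proj1_sig y).

Definition continuous {S T : Type} (opS : (S -> Prop) -> Prop)
  (opT : (T -> Prop) -> Prop) (f : S -> T) : Prop :=
  forall V, opT V -> opS (fun x => V (f x)).

Definition homeomorphic {S T : Type} (opS : (S -> Prop) -> Prop)
  (opT : (T -> Prop) -> Prop) : Prop :=
  exists (f : S -> T) (g : T -> S),
    (forall x, g (f x) = x) /\ (forall y, f (g y) = y) /\
    continuous opS opT f /\ continuous opT opS g.

Definition punctured {T : Type} (op : (T -> Prop) -> Prop) (x : T) :=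
  subspace_open op (fun y => y <> x).

Definition connected {T : Type} (op : (T -> Prop) -> Prop) : Prop :=
  forall U, op U -> op (fun x => ~ U x) -> (forall x, U x) \/ (forall x, ~ U x).

Definition countable_set {T : Type} (D : T -> Prop) : Prop :=
  exists g : T -> nat, forall x y, D x -> D y -> g x = g y -> x = y.

Definition dense {T : Type} (op : (T -> Prop) -> Prop) (D : T -> Prop) : Prop :=
  forall U, op U -> (exists x, U x) -> exists x, U x /\ D x.

Definition separable {T : Type} (op : (T -> Prop) -> Prop) : Prop :=
  exists D, countable_set D /\ dense op D.

Definition T1 {T : Type} (op : (T -> Prop) -> Prop) : Prop :=
  forall x y : T, x <> y -> exists U, op U /\ U x /\ ~ U y.

Definition R_open : (R -> Prop) -> Prop := fun U => open_set U.

Definition completely_regular {T : Type} (op : (T -> Prop) -> Prop) : Prop :=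
  forall (C : T -> Prop) (x : T), op (fun y => ~ C y) -> ~ C x ->
    exists f : T -> R, continuous op R_open f /\
      (forall y, 0 <= f y <= 1) /\ f x = 0 /\ (forall y, C y -> f y = 1).

Definition tychonoff {T : Type} (op : (T -> Prop) -> Prop) : Prop :=
  completely_regular op /\ T1 op.

(* A bijection f : X -> Z with X \ {x} homeomorphic to Z \ {f x} is turned, point by point,
   into a pair of mutually inverse maps X <-> Z that match x with f x and transport open sets
   away from these two points ([punctured_equiv]).  With this tool:
   - T1, Hausdorff and complete regularity of Z are read off from X \ {x} for a suitable point
     x, using that a connected T1 space with two points has a third one; the only delicate
     point q is handled by patching a function that is constant on a neighbourhood of q;
   - separability moves from X \ {x} to Z \ {f x}, and one point is added back;
   - connectedness is the heart of the matter.  If Z = A u B with A, B disjoint, open and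
     nonempty, then every point of Z, hence of X, is a cut point, and then every point even
     cuts Z (hence X) into three nonempty open pieces.  In a connected separable space where
     every point cuts into three pieces, the three pieces at x can be labelled by three points of a
     countable dense set, and distinct points get distinct labels ([cut3_no_common_diagonal]);
     so X injects into nat.  This contradicts the fact that a connected Tychonoff space with
     two points maps continuously onto [0,1], which is uncountable. *)

From Stdlib Require Import Reals Lra Lia Classical ClassicalEpsilon FunctionalExtensionality
  PropExtensionality ProofIrrelevance.
From Stdlib Require Cantor.
Open Scope R_scope.

Lemma op_ext {T} (op : (T -> Prop) -> Prop) (U V : T -> Prop) :
  (forall x, U x <-> V x) -> op U -> op V.
Proof.
  intros H HU. replace V with U; [exact HU|].
  apply functional_extensionality; intro x; apply propositional_extensionality; apply H.
Qed.

Section OpenSets.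
Context {T : Type} (op : (T -> Prop) -> Prop) (hT : topology op).

Lemma op_inter (U V : T -> Prop) : op U -> op V -> op (fun x => U x /\ V x).
Proof. destruct hT as [_ [h _]]; auto. Qed.

Lemma op_union {I : Type} (P : I -> T -> Prop) (J : I -> Prop) :
  (forall i, J i -> op (P i)) -> op (fun y => exists i, J i /\ P i y).
Proof.
  intro HP. destruct hT as [_ [_ hU]].
  eapply op_ext; [|apply (hU (fun U => exists i, J i /\ U = P i))].
  - intro y; split.
    + intros [U [[i [Ji ->]] Uy]]; eauto.
    + intros [i [Ji Py]]; exists (P i); eauto.
  - intros U [i [Ji ->]]; auto.
Qed.

Lemma op_union2 (U V : T -> Prop) : op U -> op V -> op (fun x => U x \/ V x).
Proof.
  intros HU HV. eapply op_ext; [|apply (op_union (fun b : bool => if b then U else V)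
                                          (fun _ => True))].
  - intro x; split; [intros [[] [_ H]]; auto | intros [H|H]; [exists true | exists false]; auto].
  - intros []; auto.
Qed.

Lemma op_empty : op (fun _ => False).
Proof.
  eapply op_ext; [|apply (op_union (fun (_ : unit) _ => True) (fun _ => False)); tauto].
  intro x; split; [intros [_ [[] _]] | intros []].
Qed.

Lemma T1_open (h1 : T1 op) (x : T) : op (fun y => y <> x).
Proof.
  eapply op_ext; [|apply (op_union (fun U => U) (fun U => op U /\ ~ U x)); tauto].
  intro y; split.
  - intros [U [[_ Ux] Uy]] ->; auto.
  - intro hy. destruct (h1 y x hy) as [U [HU [Uy Ux]]]. eauto.
Qed.

Lemma continuous_const (c : R) : continuous op R_open (fun _ => c).
Proof.
  intros V _. destruct (classic (V c)) as [Vc|nVc].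
  - eapply op_ext; [|exact (proj1 hT)]. intro; tauto.
  - eapply op_ext; [|exact op_empty]. intro; tauto.
Qed.

End OpenSets.

Lemma open_lt (c : R) : R_open (fun r => r < c).
Proof.
  intros x Hx. exists (mkposreal (c - x) ltac:(lra)). intros y Hy.
  unfold disc in Hy; simpl in Hy. apply Rabs_def2 in Hy. lra.
Qed.

Lemma open_gt (c : R) : R_open (fun r => c < r).
Proof.
  intros x Hx. exists (mkposreal (x - c) ltac:(lra)). intros y Hy.
  unfold disc in Hy; simpl in Hy. apply Rabs_def2 in Hy. lra.
Qed.

(* [0,1] is uncountable: trisecting nested intervals, the n-th interval avoids u n. *)
Section UnitIntervalUncountable.
Variable u : nat -> R.

Fixpoint trisect (n : nat) : R * R :=
  match n with
  | O => (0, 1)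
  | S n => let (a, b) := trisect n in
           if Rlt_dec (u n) ((a + b) / 2) then (a + 2 * (b - a) / 3, b)
           else (a, a + (b - a) / 3)
  end.

Lemma trisect_step n : fst (trisect n) < snd (trisect n) ->
  fst (trisect n) <= fst (trisect (S n)) /\ snd (trisect (S n)) <= snd (trisect n) /\
  fst (trisect (S n)) < snd (trisect (S n)) /\
  (forall c, fst (trisect (S n)) <= c <= snd (trisect (S n)) -> c <> u n).
Proof.
  simpl. destruct (trisect n) as [a b]; simpl. intro Hab.
  destruct (Rlt_dec (u n) ((a + b) / 2)); simpl;
    (split; [lra|split; [lra|split; [lra|intros c Hc ->; lra]]]).
Qed.

Lemma trisect_lt n : fst (trisect n) < snd (trisect n).
Proof. induction n; [simpl; lra|]. apply trisect_step; auto. Qed.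

Lemma trisect_mono n k :
  fst (trisect n) <= fst (trisect (n + k)) /\ snd (trisect (n + k)) <= snd (trisect n).
Proof.
  induction k; [rewrite Nat.add_0_r; lra|].
  rewrite Nat.add_succ_r. destruct (trisect_step (n + k) (trisect_lt _)) as [? [? _]]. lra.
Qed.

Lemma trisect_left_below_right n m : fst (trisect n) <= snd (trisect m).
Proof.
  destruct (Nat.le_ge_cases n m) as [H|H].
  - replace m with (n + (m - n))%nat by lia. destruct (trisect_mono n (m - n)).
    pose proof (trisect_lt (n + (m - n))). lra.
  - replace n with (m + (n - m))%nat by lia. destruct (trisect_mono m (n - m)).
    pose proof (trisect_lt (m + (n - m))). lra.
Qed.

Lemma sequence_misses_unit_interval : exists c, 0 <= c <= 1 /\ forall n, u n <> c.
Proof.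
  destruct (completeness (fun x => exists n, x = fst (trisect n))) as [c [Hub Hlub]].
  - exists 1. intros x [n ->]. apply (trisect_left_below_right n 0).
  - exists 0, O. reflexivity.
  - assert (Hc : forall n, fst (trisect n) <= c <= snd (trisect n)).
    { intro n; split; [apply Hub; eauto|].
      apply Hlub. intros x [m ->]. apply trisect_left_below_right. }
    exists c. split; [pose proof (Hc O) as H0; simpl in H0; lra|].
    intros n Hn. destruct (trisect_step n (trisect_lt n)) as [_ [_ [_ H]]].
    exact (H c (Hc (S n)) (eq_sym Hn)).
Qed.
End UnitIntervalUncountable.

Definition hausdorff {T} (op : (T -> Prop) -> Prop) : Prop :=
  forall x y, x <> y -> exists U V, op U /\ op V /\ U x /\ V y /\ (forall w, U w -> V w -> False).

Definition no_isolated_points {T} (op : (T -> Prop) -> Prop) : Prop :=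
  forall U w, op U -> U w -> (exists y, y <> w) -> exists y, y <> w /\ U y.

Section SeparationAxioms.
Context {T : Type} (op : (T -> Prop) -> Prop) (hT : topology op).

Lemma tychonoff_hausdorff : tychonoff op -> hausdorff op.
Proof.
  intros [hcr h1] x y hxy.
  destruct (hcr (fun w => w = y) x (T1_open op hT h1 y) hxy) as [g [gc [_ [gx gy]]]].
  exists (fun w => g w < 1/2), (fun w => 1/2 < g w).
  split; [apply (gc _ (open_lt _))|]. split; [apply (gc _ (open_gt _))|].
  rewrite gx, (gy y eq_refl). repeat split; try lra. intros; lra.
Qed.

(* A connected Tychonoff space with two points does not inject into nat: a continuous
   g with g x0 = 0, g y0 = 1 would miss some c in (0,1), and {g < c}, {g > c} disconnect. *)
Lemma connected_tychonoff_uncountable (hc : connected op) (ht : tychonoff op)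
  (x0 y0 : T) (e : T -> nat) : x0 <> y0 -> (forall a b, e a = e b -> a = b) -> False.
Proof.
  intros hxy he. destruct ht as [hcr h1].
  destruct (hcr (fun y => y = y0) x0 (T1_open op hT h1 y0) hxy) as [g [gc [gb [g0 g1]]]].
  (* u enumerates the values of g along the injection e *)
  set (u := fun n => match excluded_middle_informative (exists x, e x = n) with
                     | left H => g (proj1_sig (constructive_indefinite_description _ H))
                     | right _ => 0 end).
  assert (hu : forall x, u (e x) = g x).
  { intro x. unfold u. destruct excluded_middle_informative as [H|H]; [|exfalso; eauto].
    destruct constructive_indefinite_description as [x' hx']; simpl. rewrite (he _ _ hx'); auto. }
  destruct (sequence_misses_unit_interval u) as [c [hc01 hcu]].
  assert (gnc : forall x, g x <> c) by (intros x E; apply (hcu (e x)); rewrite hu; exact E).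
  destruct (hc (fun y => g y < c)) as [H|H].
  - apply (gc _ (open_lt c)).
  - eapply op_ext; [|apply (gc _ (open_gt c))]. intro y; specialize (gnc y). split; lra.
  - specialize (H y0). rewrite g1 in H; auto. lra.
  - apply (H x0). specialize (gnc x0). lra.
Qed.

Lemma connected_no_isolated (h1 : T1 op) (hc : connected op) : no_isolated_points op.
Proof.
  intros U w HU Uw [b hb]. apply NNPP; intro Hn.
  destruct (hc U HU) as [H|H].
  - eapply op_ext; [|apply (T1_open op hT h1 w)]. intro y; split.
    + intros hy Uy. apply Hn; eauto.
    + intros nU ->. auto.
  - apply Hn. exists b. auto.
  - exact (H w Uw).
Qed.

Lemma third_point (h1 : T1 op) (hc : connected op) (x1 x2 : T) :
  x1 <> x2 -> exists x3, x3 <> x1 /\ x3 <> x2.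
Proof.
  intro H. destruct (connected_no_isolated h1 hc _ x1 (T1_open op hT h1 x2) H)
    as [x3 [? ?]]; eauto.
Qed.

End SeparationAxioms.

Definition extend {S T} (s : S) (t : T) (F : {y | y <> s} -> {y | y <> t}) (y : S) : T :=
  match excluded_middle_informative (y = s) with
  | left _ => t
  | right h => proj1_sig (F (exist _ y h))
  end.

Lemma extend_at {S T} (s : S) (t : T) (F : {y | y <> s} -> {y | y <> t}) :
  extend s t F s = t.
Proof. unfold extend. destruct excluded_middle_informative; [reflexivity | contradiction]. Qed.

Lemma extend_off {S T} (s : S) (t : T) (F : {y | y <> s} -> {y | y <> t})
  (y : S) (h : y <> s) :
  extend s t F y = proj1_sig (F (exist _ y h)).
Proof.
  unfold extend. destruct excluded_middle_informative as [E|h']; [contradiction|].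
  rewrite (proof_irrelevance _ h' h). reflexivity.
Qed.

Lemma extend_cancel {S T} (s : S) (t : T) (F : {y | y <> s} -> {y | y <> t})
  (G : {y | y <> t} -> {y | y <> s}) :
  (forall v, G (F v) = v) -> forall y, extend t s G (extend s t F y) = y.
Proof.
  intros hGF y. destruct (classic (y = s)) as [->|h].
  - rewrite !extend_at. reflexivity.
  - rewrite (extend_off s t F y h).
    destruct (F (exist _ y h)) as [w hw] eqn:E. simpl.
    rewrite (extend_off t s G w hw), <- E, hGF. reflexivity.
Qed.

Lemma extend_trace {S T} (s : S) (t : T)
  (opS : (S -> Prop) -> Prop) (opT : (T -> Prop) -> Prop)
  (F : {y | y <> s} -> {y | y <> t}) :
  continuous (punctured opS s) (punctured opT t) F ->
  forall W, opT W -> exists U, opS U /\ forall y, y <> s -> (U y <-> W (extend s t F y)).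
Proof.
  intros cF W HW. destruct (cF (fun v => W (proj1_sig v))) as [U [HU HUe]].
  - exists W. split; [exact HW | intro; reflexivity].
  - exists U. split; [exact HU|]. intros y h. rewrite (extend_off s t F y h).
    exact (iff_sym (HUe (exist _ y h))).
Qed.

Definition punctured_equiv {S T : Type} (opS : (S -> Prop) -> Prop) (opT : (T -> Prop) -> Prop)
  (s : S) (t : T) (phi : S -> T) (psi : T -> S) : Prop :=
  phi s = t /\ (forall y, psi (phi y) = y) /\ (forall w, phi (psi w) = w) /\
  (forall W, opT W -> exists U, opS U /\ forall y, y <> s -> (U y <-> W (phi y))) /\
  (forall U, opS U -> exists W, opT W /\ forall w, w <> t -> (W w <-> U (psi w))).

Lemma homeomorphic_punctured_equiv {S T} (opS : (S -> Prop) -> Prop)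
  (opT : (T -> Prop) -> Prop) (s : S) (t : T) :
  homeomorphic (punctured opS s) (punctured opT t) ->
  exists phi psi, punctured_equiv opS opT s t phi psi.
Proof.
  intros [F [G [hGF [hFG [cF cG]]]]].
  exists (extend s t F), (extend t s G).
  split; [apply extend_at|]. split; [apply extend_cancel; exact hGF|].
  split; [apply extend_cancel; exact hFG|].
  split; apply extend_trace; assumption.
Qed.

Section PuncturedEquiv.
Context {S T : Type} {opS : (S -> Prop) -> Prop} {opT : (T -> Prop) -> Prop}
  {s : S} {t : T} {phi : S -> T} {psi : T -> S}.
Hypothesis He : punctured_equiv opS opT s t phi psi.

Lemma equiv_sym : punctured_equiv opT opS t s psi phi.
Proof.
  destruct He as [hs [hpp [hpp' [hphi hpsi]]]].
  split; [rewrite <- hs; apply hpp|]. auto.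
Qed.

Lemma equiv_inj (y1 y2 : S) : phi y1 = phi y2 -> y1 = y2.
Proof. destruct He as [_ [hpp _]]. intro E. rewrite <- (hpp y1), E, hpp. reflexivity. Qed.

Lemma equiv_neq (y : S) : y <> s -> phi y <> t.
Proof. destruct He as [hs _]. intros hy E. apply hy, equiv_inj. congruence. Qed.

Lemma equiv_open (hS : topology opS) (h1 : T1 opS) {W : T -> Prop} :
  opT W -> opS (fun y => y <> s /\ W (phi y)).
Proof.
  destruct He as [_ [_ [_ [hphi _]]]]. intro HW. destruct (hphi W HW) as [U [HU HUe]].
  eapply op_ext; [|exact (op_inter opS hS _ _ HU (T1_open opS hS h1 s))].
  intro y; split.
  - intros [Uy hy]. split; [exact hy | apply HUe; auto].
  - intros [hy Wy]. split; [apply HUe; auto | exact hy].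
Qed.

End PuncturedEquiv.

Definition continuous_away {T} (op : (T -> Prop) -> Prop) (t : T) (g : T -> R) : Prop :=
  forall V, R_open V -> exists W, op W /\ forall y, y <> t -> (W y <-> V (g y)).

Section TransferAcrossEquiv.
Context {S T : Type} (opS : (S -> Prop) -> Prop) (opT : (T -> Prop) -> Prop)
  (hS : topology opS) (h1 : T1 opS) (s : S) (t : T) (phi : S -> T) (psi : T -> S).
Hypothesis He : punctured_equiv opS opT s t phi psi.

Lemma cr_transfer_away (hcr : completely_regular opS) (C : T -> Prop) (w : T) :
  opT (fun y => ~ C y) -> w <> t -> ~ C w ->
  exists g : T -> R, continuous_away opT t g /\ (forall y, 0 <= g y <= 1) /\ g w = 0 /\
    (forall y, y <> t -> C y -> g y = 1).
Proof.
  intros HC hw nCw. pose proof He as [_ [_ [hpp' [_ hpsi]]]].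
  destruct (hcr (fun y => y = s \/ C (phi y)) (psi w)) as [h [hc [hb [h0 h1']]]].
  - eapply op_ext; [|exact (equiv_open He hS h1 HC)]. intro y; tauto.
  - rewrite hpp'. intros [E|E]; [|auto].
    exact (equiv_neq (equiv_sym He) w hw E).
  - exists (fun y => h (psi y)). split; [|split; [|split]].
    + intros V HV. destruct (hpsi _ (hc V HV)) as [W [HW HWe]]. eauto.
    + intro; apply hb.
    + exact h0.
    + intros y hy Cy. apply h1'. right. rewrite hpp'. exact Cy.
Qed.

Lemma separable_transfer : separable opS -> separable opT.
Proof.
  intros [D [[g hg] hd]]. pose proof He as [_ [hpp [hpp' _]]].
  exists (fun w => w = t \/ D (psi w)). split.
  - exists (fun w => if excluded_middle_informative (w = t) then O else Nat.succ (g (psi w))).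
    intros w1 w2 D1 D2.
    destruct excluded_middle_informative as [E1|n1], excluded_middle_informative as [E2|n2];
      intro E; try discriminate; [congruence|].
    injection E as E.
    destruct D1 as [|D1]; [contradiction|]. destruct D2 as [|D2]; [contradiction|].
    rewrite <- (hpp' w1), <- (hpp' w2), (hg _ _ D1 D2 E). reflexivity.
  - intros W HW [w0 Ww0]. destruct (classic (W t)) as [Wt|nWt]; [exists t; auto|].
    assert (hw0 : w0 <> t) by (intros ->; auto).
    destruct (hd _ (equiv_open He hS h1 HW)) as [y [[hy Wy] Dy]].
    + exists (psi w0). rewrite hpp'. split; [exact (equiv_neq (equiv_sym He) w0 hw0) | exact Ww0].
    + exists (phi y). split; [exact Wy | right; rewrite hpp; exact Dy].
Qed.

End TransferAcrossEquiv.

Lemma continuous_patch {T} (op : (T -> Prop) -> Prop) (hT : topology op) (h1 : T1 op)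
  (q : T) (c : R) (g : T -> R) (N : T -> Prop) :
  continuous_away op q g -> op N -> N q -> (forall y, N y -> y <> q -> g y = c) ->
  continuous op R_open (fun y => if excluded_middle_informative (y = q) then c else g y).
Proof.
  intros hg HN Nq Nc V HV. destruct (hg V HV) as [W [HW HWe]].
  assert (HWq : op (fun y => W y /\ y <> q)) by (apply op_inter; auto; apply T1_open; auto).
  destruct (classic (V c)) as [Vc|nVc].
  - eapply op_ext; [|exact (op_union2 op hT _ _ HWq HN)].
    intro y. destruct (excluded_middle_informative (y = q)) as [->|hy].
    + split; [intros _; exact Vc | intros _; right; exact Nq].
    + rewrite <- (HWe y hy). split; [intros [[Wy _]|Ny]; [exact Wy|] | intros Wy; left; auto].
      apply HWe; [exact hy|]. rewrite (Nc y Ny hy). exact Vc.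
  - eapply op_ext; [|exact HWq].
    intro y. destruct (excluded_middle_informative (y = q)) as [E|hy].
    + split; [intros [_ nq]; contradiction | intro Vc; contradiction].
    + rewrite (HWe y hy). tauto.
Qed.

Definition cut_partition {T I : Type} (op : (T -> Prop) -> Prop) (x : T) (P : I -> T -> Prop)
  : Prop :=
  (forall i, op (P i)) /\ (forall i, exists y, P i y) /\
  (forall i j y, P i y -> P j y -> i = j) /\ (forall y, y <> x <-> exists i, P i y).

Lemma cut_transfer {S T I} (opS : (S -> Prop) -> Prop) (opT : (T -> Prop) -> Prop)
  (hS : topology opS) (h1 : T1 opS) (s : S) (t : T) (phi : S -> T) (psi : T -> S)
  (P : I -> T -> Prop) :
  punctured_equiv opS opT s t phi psi -> cut_partition opT t P ->
  cut_partition opS s (fun i y => y <> s /\ P i (phi y)).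
Proof.
  intros He [Po [Pn [Pd Pc]]]. pose proof He as [_ [_ [hpp' _]]].
  split; [|split; [|split]].
  - intro i. exact (equiv_open He hS h1 (Po i)).
  - intro i. destruct (Pn i) as [w Pw]. exists (psi w). rewrite hpp'. split; [|exact Pw].
    apply (equiv_neq (equiv_sym He)), Pc. eauto.
  - intros i j y [_ a] [_ b]. eauto.
  - intro y; split; [|intros [i [hy _]]; exact hy].
    intro hy. destruct (proj1 (Pc _) (equiv_neq He y hy)) as [i Pi]. eauto.
Qed.

Section CutPoints.
Context {T : Type} (op : (T -> Prop) -> Prop) (hT : topology op) (hc : connected op).

(* If y lies in the piece k at x and x in the piece m at y, every other piece at x lies in
   the piece m at y: otherwise a piece at x would be disconnected by the pieces at y. *)
Lemma piece_inside {I J} (x y : T) (P : I -> T -> Prop) (Q : J -> T -> Prop) (k i : I) (m : J) :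
  cut_partition op x P -> cut_partition op y Q -> P k y -> Q m x -> i <> k ->
  forall w, P i w -> Q m w.
Proof.
  intros [Po [_ [Pd Pc]]] [Qo [_ [Qd Qc]]] Pky Qmx hik.
  assert (Qy : forall w, P i w -> exists j, Q j w).
  { intros w Pw. apply Qc. intros ->. apply hik; eauto. }
  set (A := fun w => P i w /\ exists j, j <> m /\ Q j w).
  assert (HA : op A)
    by exact (op_inter op hT _ _ (Po i) (op_union op hT Q (fun j => j <> m) (fun j _ => Qo j))).
  assert (HAc : op (fun w => ~ A w)).
  { eapply op_ext;
      [|exact (op_union2 op hT _ _ (op_union op hT P (fun j => j <> i) (fun j _ => Po j)) (Qo m))].
    intro w; split.
    - intros [[j [hj Pj]] | Qw] [Pi [j' [hj' Qj']]]; [apply hj | apply hj']; eauto.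
    - intro nA. destruct (classic (w = x)) as [->|hw]; [right; exact Qmx|].
      destruct (proj1 (Pc w) hw) as [j Pj].
      destruct (classic (j = i)) as [->|hj]; [|left; eauto].
      right. destruct (Qy w Pj) as [j' Qj'].
      destruct (classic (j' = m)) as [->|hj']; [exact Qj'|]. exfalso; apply nA; split; eauto. }
  destruct (hc A HA HAc) as [H|H].
  - exfalso. destruct (H x) as [Pix _]. apply (proj2 (Pc x)); eauto.
  - intros w Pw. destruct (Qy w Pw) as [j Qj].
    destruct (classic (j = m)) as [->|hj]; [exact Qj|]. exfalso; apply (H w); split; eauto.
Qed.

Lemma piece_meets_nbhd {I} (x : T) (P : I -> T -> Prop) (K : T -> Prop) (i : I) :
  cut_partition op x P -> op K -> K x -> exists w, K w /\ P i w.
Proof.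
  intros [Po [Pn [Pd Pc]]] HK Kx. apply NNPP; intro Hn.
  destruct (hc (P i) (Po i)) as [H|H].
  - eapply op_ext;
      [|exact (op_union2 op hT _ _ HK (op_union op hT P (fun j => j <> i) (fun j _ => Po j)))].
    intro w; split.
    + intros [Kw | [j [hj Pj]]] Pi; [apply Hn; eauto | apply hj; eauto].
    + intro nP. destruct (classic (w = x)) as [->|hw]; [left; exact Kx|].
      destruct (proj1 (Pc w) hw) as [j Pj]. right; exists j; split; [intros ->|]; auto.
  - apply (proj2 (Pc x)); eauto.
  - destruct (Pn i) as [w Pw]; exact (H w Pw).
Qed.

Lemma piece_splits_at_cut_point {I} (x q : T) (P : I -> T -> Prop) (Kq : bool -> T -> Prop)
  (i : I) :
  cut_partition op x P -> cut_partition op q Kq -> P i q ->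
  exists L1 L2 : T -> Prop, op L1 /\ op L2 /\ (exists y, L1 y) /\ (exists y, L2 y) /\
    (forall y, L1 y -> L2 y -> False) /\ (forall y, L1 y \/ L2 y <-> P i y /\ y <> q).
Proof.
  intros HP HK Piq. pose proof HP as [Po [_ [_ Pc]]]. pose proof HK as [Ko [Kn [Kd Kc]]].
  assert (hxq : x <> q) by (intros ->; apply (proj2 (Pc q)); eauto).
  destruct (proj1 (Kc x) hxq) as [k Kx].
  assert (hk : negb k <> k) by (destruct k; discriminate).
  exists (fun y => P i y /\ Kq k y), (Kq (negb k)).
  split; [apply op_inter; auto|]. split; [auto|].
  split; [destruct (piece_meets_nbhd x P (Kq k) i HP (Ko k) Kx) as [w [? ?]]; eauto|].
  split; [auto|]. split; [intros y [_ a] b; exact (hk (Kd _ _ _ b a))|].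
  intro y; split.
  - intros [[Pi Kk] | Kk]; split.
    + exact Pi.
    + intros ->. apply (proj2 (Kc q)); eauto.
    + exact (piece_inside q x Kq P k (negb k) i HK HP Kx Piq hk y Kk).
    + intros ->. apply (proj2 (Kc q)); eauto.
  - intros [Pi hy]. destruct (proj1 (Kc y) hy) as [j Kj].
    destruct j, k; simpl; auto.
Qed.

End CutPoints.

Inductive idx3 : Type := I1 | I2 | I3.

Lemma idx3_avoid (k m : idx3) : exists i, i <> k /\ i <> m.
Proof.
  destruct k, m;
    first [ exists I1; split; discriminate | exists I2; split; discriminate
          | exists I3; split; discriminate ].
Qed.

Lemma idx3_choice {A} (Rel : idx3 -> A -> Prop) :
  (forall i, exists a, Rel i a) -> exists c : idx3 -> A, forall i, Rel i (c i).
Proof.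
  intro H. destruct (H I1) as [a1 h1], (H I2) as [a2 h2], (H I3) as [a3 h3].
  exists (fun i => match i with I1 => a1 | I2 => a2 | I3 => a3 end). intros []; auto.
Qed.

Definition pieces3 {T} (A B C : T -> Prop) (i : idx3) : T -> Prop :=
  match i with I1 => A | I2 => B | I3 => C end.

Lemma cut3_of_split {T} (op : (T -> Prop) -> Prop) (z : T) (A B C : T -> Prop) :
  op A -> op B -> op C -> (exists y, A y) -> (exists y, B y) -> (exists y, C y) ->
  (forall y, A y -> B y -> False) -> (forall y, A y -> C y -> False) ->
  (forall y, B y -> C y -> False) -> (forall y, y <> z <-> A y \/ B y \/ C y) ->
  cut_partition op z (pieces3 A B C).
Proof.
  intros oA oB oC nA nB nC dAB dAC dBC Hc.
  split; [intros []; assumption|]. split; [intros []; assumption|]. split.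
  - intros [] [] y; simpl; intros; solve [reflexivity | exfalso; eauto].
  - intro y; rewrite Hc; split.
    + intros [?|[?|?]]; [exists I1 | exists I2 | exists I3]; assumption.
    + intros [[] ?]; simpl in *; tauto.
Qed.

Definition clopen_split {T} (op : (T -> Prop) -> Prop) (A B : T -> Prop) : Prop :=
  op A /\ op B /\ (forall y, A y <-> ~ B y) /\ (exists y, A y) /\ (exists y, B y).

Lemma clopen_split_sym {T} (op : (T -> Prop) -> Prop) (A B : T -> Prop) :
  clopen_split op A B -> clopen_split op B A.
Proof.
  intros [hA [hB [hc [nA nB]]]]. repeat split; auto.
  - intros By Ay. exact (proj1 (hc y) Ay By).
  - intro nAy. apply NNPP. intro nBy. exact (nAy (proj2 (hc y) nBy)).
Qed.

Lemma cut_of_clopen {T} (op : (T -> Prop) -> Prop) (hT : topology op) (h1 : T1 op)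
  (hni : no_isolated_points op) (A B : T -> Prop) (a : T) :
  clopen_split op A B -> B a ->
  cut_partition op a (fun i : bool => if i then A else fun y => B y /\ y <> a).
Proof.
  intros [HA [HB [Hc [[b Ab] _]]]] Ba.
  assert (hba : b <> a) by (intros ->; exact (proj1 (Hc a) Ab Ba)).
  split; [|split; [|split]].
  - intros []; [exact HA | exact (op_inter op hT _ _ HB (T1_open op hT h1 a))].
  - intros []; [eauto|]. destruct (hni B a HB Ba (ex_intro _ b hba)) as [y [hy By]]. eauto.
  - intros [] [] y; simpl; auto; intros H1 H2; exfalso.
    + exact (proj1 (Hc y) H1 (proj1 H2)).
    + exact (proj1 (Hc y) H2 (proj1 H1)).
  - intro y; split.
    + intro hy. destruct (classic (A y)) as [Ay|nAy]; [exists true; exact Ay|].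
      exists false. split; [|exact hy]. apply NNPP. intro nBy. exact (nAy (proj2 (Hc y) nBy)).
    + intros [[] Hi]; simpl in Hi; [intros ->; exact (proj1 (Hc a) Hi Ba) | exact (proj2 Hi)].
Qed.

(* Three-way cuts at distinct points x, y cannot meet diagonally: pick a label i other than
   the piece at x containing y and the piece at y containing x; then P i lies in the piece at
   y containing x, so it misses Q i. *)
Lemma cut3_no_common_diagonal {T} (op : (T -> Prop) -> Prop) (hT : topology op)
  (hc : connected op) (x y : T) (P Q : idx3 -> T -> Prop) (d : idx3 -> T) :
  cut_partition op x P -> cut_partition op y Q -> x <> y ->
  (forall i, P i (d i) /\ Q i (d i)) -> False.
Proof.
  intros HP HQ hxy Hd. pose proof HP as [_ [_ [_ Pc]]]. pose proof HQ as [_ [_ [Qd Qc]]].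
  destruct (proj1 (Pc y) (not_eq_sym hxy)) as [k Pky].
  destruct (proj1 (Qc x) hxy) as [m Qmx].
  destruct (idx3_avoid k m) as [i [hik him]].
  destruct (Hd i) as [Pi Qi].
  apply him, (Qd i m (d i) Qi).
  exact (piece_inside op hT hc x y P Q k i m HP HQ Pky Qmx hik _ Pi).
Qed.

Lemma to_nat_inj (p q : nat * nat) : Cantor.to_nat p = Cantor.to_nat q -> p = q.
Proof. intro H. rewrite <- (Cantor.cancel_of_to p), <- (Cantor.cancel_of_to q), H. reflexivity. Qed.

(* In a connected separable space where every point cuts into three pieces, labelling the
   pieces by points of a countable dense set injects the space into nat. *)
Lemma separable_cut3_countable {T} (op : (T -> Prop) -> Prop) (hT : topology op)
  (hc : connected op) (hs : separable op)
  (H3 : forall x, exists P : idx3 -> T -> Prop, cut_partition op x P) :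
  exists e : T -> nat, forall a b, e a = e b -> a = b.
Proof.
  destruct hs as [D [[g hg] hd]].
  assert (Hcode : forall x, exists c : idx3 -> nat, exists P, cut_partition op x P /\
             forall i, exists w, D w /\ P i w /\ g w = c i).
  { intro x. destruct (H3 x) as [P HP]. pose proof HP as [Po [Pn _]].
    destruct (idx3_choice (fun i n => exists w, D w /\ P i w /\ g w = n)) as [c Hc].
    - intro i. destruct (hd (P i) (Po i) (Pn i)) as [w [Pw Dw]]. eauto.
    - eauto. }
  set (code := fun x => proj1_sig (constructive_indefinite_description _ (Hcode x))).
  exists (fun x => Cantor.to_nat (Cantor.to_nat (code x I1, code x I2), code x I3)).
  intros x y Exy.
  assert (Hc : forall i, code x i = code y i).
  { apply to_nat_inj in Exy.
    pose proof (f_equal fst Exy) as E12. pose proof (f_equal snd Exy) as E3. cbn [fst snd] in *.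
    apply to_nat_inj in E12.
    pose proof (f_equal fst E12) as E1. pose proof (f_equal snd E12) as E2. cbn [fst snd] in *.
    intros []; assumption. }
  unfold code in Hc.
  destruct (constructive_indefinite_description _ (Hcode x)) as [cx [P [HP HPw]]].
  destruct (constructive_indefinite_description _ (Hcode y)) as [cy [Q [HQ HQw]]].
  simpl in Hc. apply NNPP; intro hxy.
  destruct (idx3_choice (fun i w => P i w /\ Q i w)) as [d Hd].
  - intro i. destruct (HPw i) as [w [Dw [Pw gw]]], (HQw i) as [w' [Dw' [Qw gw']]].
    assert (w = w') as <- by (apply hg; congruence). eauto.
  - exact (cut3_no_common_diagonal op hT hc x y P Q d HP HQ hxy Hd).
Qed.

Section SameMultiDeck.
Variables (X Z : Type) (opX : (X -> Prop) -> Prop) (opZ : (Z -> Prop) -> Prop).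
Hypotheses (hX : topology opX) (hZ : topology opZ).
Hypotheses (hconn : connected opX) (hsep : separable opX).
Hypotheses (hcr : completely_regular opX) (hT1 : T1 opX).
Variable f : X -> Z.
Hypotheses (finj : forall a b, f a = f b -> a = b) (fsurj : forall z, exists x, f x = z).
Hypothesis hdeck : forall x : X, homeomorphic (punctured opX x) (punctured opZ (f x)).

Lemma deck_equiv (x : X) : exists phi psi, punctured_equiv opX opZ x (f x) phi psi.
Proof. exact (homeomorphic_punctured_equiv opX opZ x (f x) (hdeck x)). Qed.

(* Two points of Z leave room for a third one, since X has three points once it has two. *)
Lemma Z_avoid (z w : Z) : z <> w -> exists x, f x <> z /\ f x <> w.
Proof.
  intro hzw. destruct (fsurj z) as [xz <-], (fsurj w) as [xw <-].
  assert (hx : xz <> xw) by (intros ->; auto).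
  destruct (third_point opX hX hT1 hconn xz xw hx) as [x [n1 n2]].
  exists x. split; intro E; [apply n1 | apply n2]; auto.
Qed.

(* Separate z from w inside Z \ {f x} for a third point x. *)
Lemma Z_T1 : T1 opZ.
Proof.
  intros z w hzw. destruct (Z_avoid z w hzw) as [x [hz hw]].
  destruct (deck_equiv x) as [phi [psi He]]. pose proof He as [_ [_ [_ [_ hpsi]]]].
  assert (hpq : psi z <> psi w) by (intro E; exact (hzw (equiv_inj (equiv_sym He) _ _ E))).
  destruct (hT1 _ _ hpq) as [U [HU [Uz nUw]]].
  destruct (hpsi U HU) as [W [HW HWe]].
  exists W. split; [exact HW|]. split.
  - apply HWe; auto.
  - rewrite HWe; auto.
Qed.

(* Likewise disjoint neighbourhoods, using that X is Hausdorff and Z is T1. *)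
Lemma Z_hausdorff : hausdorff opZ.
Proof.
  intros z q hzq. destruct (Z_avoid z q hzq) as [x [hz hq]].
  destruct (deck_equiv x) as [phi [psi He]]. pose proof (equiv_sym He) as He'.
  assert (hpq : psi z <> psi q) by (intro E; exact (hzq (equiv_inj He' _ _ E))).
  destruct (tychonoff_hausdorff opX hX (conj hcr hT1) _ _ hpq) as [U [V [HU [HV [Uz [Vq UV]]]]]].
  exists (fun y => y <> f x /\ U (psi y)), (fun y => y <> f x /\ V (psi y)).
  split; [exact (equiv_open He' hZ Z_T1 HU)|]. split; [exact (equiv_open He' hZ Z_T1 HV)|].
  split; [auto|]. split; [auto|]. intros w [_ a] [_ b]. eauto.
Qed.

Lemma Z_separable : separable opZ.
Proof.
  destruct (classic (exists x : X, True)) as [[x _]|Hempty].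
  - destruct (deck_equiv x) as [phi [psi He]].
    exact (separable_transfer opX opZ hX hT1 x (f x) phi psi He hsep).
  - exists (fun _ => False). split.
    + exists (fun _ => O). intros _ _ [].
    + intros U _ [z _]. exfalso. destruct (fsurj z) as [x _]. eauto.
Qed.

(* To separate z from a closed C, pick q <> z and disjoint neighbourhoods M of z and N of q;
   a function from Z \ {q} that is 0 at z and 1 on C and off M is completed by the value 1
   at q, being already 1 on N \ {q}. *)
Lemma Z_completely_regular : completely_regular opZ.
Proof.
  intros C z HC nCz.
  destruct (classic (exists w, w <> z)) as [[w hwz]|Hone].
  2:{ exists (fun _ => 0). split; [apply continuous_const; exact hZ|].
      split; [intros; lra|]. split; [reflexivity|].
      intros y Cy. exfalso. apply Hone. exists y. intros ->. auto. }
  destruct (fsurj w) as [x <-].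
  destruct (Z_hausdorff z (f x) (not_eq_sym hwz)) as [M [N [HM [HN [Mz [Nq MN]]]]]].
  destruct (deck_equiv x) as [phi [psi He]].
  destruct (cr_transfer_away opX opZ hX hT1 x (f x) phi psi He hcr (fun y => C y \/ ~ M y) z)
    as [g [hg [hgb [hgz hg1]]]].
  - eapply op_ext; [|exact (op_inter opZ hZ _ _ HC HM)].
    intro y; split; [tauto | intro H; split; [tauto | apply NNPP; tauto]].
  - exact (not_eq_sym hwz).
  - tauto.
  - exists (fun y => if excluded_middle_informative (y = f x) then 1 else g y).
    split; [|split; [|split]].
    + apply (continuous_patch opZ hZ Z_T1 (f x) 1 g N hg HN Nq).
      intros y Ny hy. apply hg1; [exact hy|]. right; intro My; exact (MN y My Ny).
    + intro y. destruct excluded_middle_informative; [lra | apply hgb].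
    + destruct excluded_middle_informative as [E|_]; [exfalso; exact (hwz (eq_sym E))|exact hgz].
    + intros y Cy. destruct excluded_middle_informative as [E|hy]; [reflexivity | auto].
Qed.

(* An isolated point w of Z would give the isolated point psi w of X \ {x}, hence of X. *)
Lemma Z_no_isolated : no_isolated_points opZ.
Proof.
  intros U w HU Uw [b hb].
  destruct (fsurj b) as [xb <-].
  destruct (deck_equiv xb) as [phi [psi He]]. pose proof He as [_ [_ [hpp' _]]].
  assert (hw : psi w <> xb) by exact (equiv_neq (equiv_sym He) w (not_eq_sym hb)).
  destruct (connected_no_isolated opX hX hT1 hconn _ (psi w) (equiv_open He hX hT1 HU))
    as [y [hy [hyb Uy]]]; [rewrite hpp'; auto | exists xb; auto|].
  exists (phi y). split; [|exact Uy].
  intro E. apply hy. rewrite <- E. symmetry. apply (proj1 (proj2 He)).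
Qed.

Lemma X_cut_of_Z_cut {I} :
  (forall z, exists Q : I -> Z -> Prop, cut_partition opZ z Q) ->
  forall x, exists P : I -> X -> Prop, cut_partition opX x P.
Proof.
  intros HZ x. destruct (deck_equiv x) as [phi [psi He]]. destruct (HZ (f x)) as [Q HQ].
  eexists. exact (cut_transfer opX opZ hX hT1 x (f x) phi psi Q He HQ).
Qed.

Section Disconnected.
Variables A B : Z -> Prop.
Hypothesis HAB : clopen_split opZ A B.

Lemma Z_cut2 (z : Z) : exists Q : bool -> Z -> Prop, cut_partition opZ z Q.
Proof.
  pose proof HAB as [_ [_ [Hc _]]].
  destruct (classic (B z)) as [Bz|nBz]; eexists.
  - exact (cut_of_clopen opZ hZ Z_T1 Z_no_isolated A B z HAB Bz).
  - exact (cut_of_clopen opZ hZ Z_T1 Z_no_isolated B A z (clopen_split_sym _ _ _ HAB)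
             (proj2 (Hc z) nBz)).
Qed.

(* Let z lie in B and b in A.  At b, Z is cut into B and A \ {b}; pulled back to X, the point q
   corresponding to z lies in the piece coming from B, and q is a cut point of X, so this
   piece minus q splits into two open sets L1, L2.  Pushed forward to Z, they cut B \ {z}
   in two, and A is the third piece at z. *)
Lemma Z_cut3_side (z : Z) : B z -> exists Q : idx3 -> Z -> Prop, cut_partition opZ z Q.
Proof.
  intro Bz. pose proof HAB as [HA [HB [Hc [[b Ab] _]]]].
  destruct (fsurj b) as [xb <-].
  destruct (deck_equiv xb) as [phi [psi He]]. pose proof He as [_ [hpp [hpp' _]]].
  pose proof (equiv_sym He) as He'.
  pose proof (cut_transfer opX opZ hX hT1 xb (f xb) phi psi _ He
    (cut_of_clopen opZ hZ Z_T1 Z_no_isolated B A (f xb) (clopen_split_sym _ _ _ HAB) Ab)) as Hxb.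
  assert (hzb : z <> f xb) by (intros ->; exact (proj1 (Hc _) Ab Bz)).
  assert (Hq : psi z <> xb /\ B (phi (psi z)))
    by (rewrite hpp'; split; [exact (equiv_neq He' z hzb) | exact Bz]).
  destruct (X_cut_of_Z_cut Z_cut2 (psi z)) as [Kq HKq].
  destruct (piece_splits_at_cut_point opX hX hconn xb (psi z) _ Kq true Hxb HKq Hq)
    as [L1 [L2 [HL1 [HL2 [[y1 L1y] [[y2 L2y] [L12 HL]]]]]]].
  simpl in HL.
  assert (HLw : forall w, w <> f xb -> (L1 (psi w) \/ L2 (psi w) <-> B w /\ w <> z)).
  { intros w hw. rewrite HL, hpp'. pose proof (equiv_neq He' w hw).
    split; [intros [[_ Bw] hwz]; split; [exact Bw | intros ->; auto]|].
    intros [Bw hwz]. split; [auto|]. intro E. exact (hwz (equiv_inj He' _ _ E)). }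
  assert (Hy : forall y, L1 y \/ L2 y -> y <> xb) by (intros y Ly; apply HL in Ly; tauto).
  exists (pieces3 A (fun w => w <> f xb /\ L1 (psi w)) (fun w => w <> f xb /\ L2 (psi w))).
  apply cut3_of_split.
  - exact HA.
  - exact (equiv_open He' hZ Z_T1 HL1).
  - exact (equiv_open He' hZ Z_T1 HL2).
  - eauto.
  - exists (phi y1). rewrite hpp. split; [|exact L1y].
    exact (equiv_neq He y1 (Hy y1 (or_introl L1y))).
  - exists (phi y2). rewrite hpp. split; [|exact L2y].
    exact (equiv_neq He y2 (Hy y2 (or_intror L2y))).
  - intros w Aw [hw Lw]. exact (proj1 (Hc w) Aw (proj1 (proj1 (HLw w hw) (or_introl Lw)))).
  - intros w Aw [hw Lw]. exact (proj1 (Hc w) Aw (proj1 (proj1 (HLw w hw) (or_intror Lw)))).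
  - intros w [_ L1w] [_ L2w]. exact (L12 _ L1w L2w).
  - intro w; split.
    + intro hwz. destruct (classic (A w)) as [Aw|nAw]; [left; exact Aw|right].
      assert (Bw : B w) by (apply NNPP; intro nBw; exact (nAw (proj2 (Hc w) nBw))).
      assert (hw : w <> f xb) by (intros ->; exact (proj1 (Hc _) Ab Bw)).
      destruct (proj2 (HLw w hw) (conj Bw hwz)); [left | right]; auto.
    + intros [Aw | [[hw Lw] | [hw Lw]]].
      * intros ->. exact (proj1 (Hc z) Aw Bz).
      * exact (proj2 (proj1 (HLw w hw) (or_introl Lw))).
      * exact (proj2 (proj1 (HLw w hw) (or_intror Lw))).
Qed.

End Disconnected.

Lemma Z_cut3 (A B : Z -> Prop) (HAB : clopen_split opZ A B) (z : Z) :
  exists Q : idx3 -> Z -> Prop, cut_partition opZ z Q.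
Proof.
  pose proof HAB as [_ [_ [Hc _]]]. destruct (classic (B z)) as [Bz|nBz].
  - exact (Z_cut3_side A B HAB z Bz).
  - exact (Z_cut3_side B A (clopen_split_sym _ _ _ HAB) z (proj2 (Hc z) nBz)).
Qed.

(* A disconnection of Z makes every point of X cut X into three pieces, so the connected
   separable Tychonoff space X would inject into nat. *)
Lemma Z_connected : connected opZ.
Proof.
  intros U HU HUc. apply NNPP; intro Hn.
  apply not_or_and in Hn as [H1 H2].
  apply not_all_ex_not in H1 as [b nUb]. apply not_all_not_ex in H2 as [a Ua].
  assert (HAB : clopen_split opZ (fun y => ~ U y) U)
    by (split; [exact HUc|]; split; [exact HU|]; split; [reflexivity | eauto]).
  destruct (separable_cut3_countable opX hX hconn hsep (X_cut_of_Z_cut (Z_cut3 _ _ HAB)))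
    as [e he].
  destruct (fsurj a) as [xa <-], (fsurj b) as [xb <-].
  apply (connected_tychonoff_uncountable opX hX hconn (conj hcr hT1) xa xb e); [|exact he].
  intros ->. contradiction.
Qed.

End SameMultiDeck.

Theorem theorem7p4 (X Z : Type) (opX : (X -> Prop) -> Prop) (opZ : (Z -> Prop) -> Prop)
  (hX : topology opX) (hZ : topology opZ)
  (hconn : connected opX) (hsep : separable opX) (hty : tychonoff opX)
  (f : X -> Z) (finj : forall a b, f a = f b -> a = b) (fsurj : forall z, exists x, f x = z)
  (hdeck : forall x : X, homeomorphic (punctured opX x) (punctured opZ (f x))) :
  connected opZ /\ separable opZ /\ tychonoff opZ.
Proof.
  destruct hty as [hcr h1].
  split; [|split; [|split]].
  - exact (Z_connected X Z opX opZ hX hZ hconn hsep hcr h1 f finj fsurj hdeck).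
  - exact (Z_separable X Z opX opZ hX hsep h1 f fsurj hdeck).
  - exact (Z_completely_regular X Z opX opZ hX hZ hconn hcr h1 f finj fsurj hdeck).
  - exact (Z_T1 X Z opX opZ hX hconn h1 f finj fsurj hdeck).
Qed.
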